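(* Assume $Y = \{y \in \mathbb{R}^m : Ay = b,\ y\ge 0\}$ with $A$ of full row rank, and that the linear program $z^* := \min\{c^\top x + d^\top y : Tx + Qy = h,\ x\in X,\ y\in Y\}$ has a finite optimal value. Let $\hat\alpha$ be an optimal solution of $$\max_{\alpha\in\mathbb{R}^p}\Big\{-\alpha^\top h + \sigma_X(c + T^\top\alpha) + \sigma_Y(Q^\top\alpha + d)\Big\},$$ let $B$ be an optimal basis for $\min\{(Q^\top\hat\alpha + d)^\top y : y \in Y\}$, and let $C_B$ be the associated corner. Then $$\inf\{c^\top x + \theta : x \in X,\ (h - Tx,\theta) \in \mathrm{epi}(f_{C_B})\} = z^*,$$ i.e., the facets of $\mathrm{epi}(f_{C_B})$ (corner Benders' cuts) together with $x\in X$ recover the bound $z^*$; moreover the Lagrangian cut $\hat\alpha^\top(h - Tx) + \theta \ge \sigma_{\mathrm{epi}(f_Y)}(\hat\alpha,1)$ is valid for $\{(x,\theta) : (h-Tx,\theta)\in\mathrm{epi}(f_{C_B})\}$.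
   Context: $X\subseteq\mathbb{R}^n$ is a nonempty polyhedron; $T\in\mathbb{R}^{p\times n}$, $Q\in\mathbb{R}^{p\times m}$, $h\in\mathbb{R}^p$, $c\in\mathbb{R}^n$, $d\in\mathbb{R}^m$. For $\mathcal{X}\subseteq\mathbb{R}^k$, $\sigma_{\mathcal{X}}(\alpha) := \inf_{x\in\mathcal{X}}\alpha^\top x$ ($\sigma_{\mathcal{X}}(\alpha,\alpha_0)$ at a concatenated vector). For $\mathcal{Y}\subseteq\mathbb{R}^m$, $f_{\mathcal{Y}}(w) := \inf_{y\in\mathcal{Y}}\{d^\top y : Qy = w\}$, $\mathrm{epi}(f_{\mathcal{Y}}) := \{(w,\theta) : \theta \ge f_{\mathcal{Y}}(w)\}$. A basis is a set $B\subseteq[m]$ with $A_B$ square invertible, $N := [m]\setminus B$; $B$ is optimal for $\min\{g^\top y : y\in Y\}$ if $A_B^{-1}b\ge 0$ and $g_N^\top - g_B^\top A_B^{-1}A_N \ge 0$. The corner associated with $B$ is $C_B := \{y\in\mathbb{R}^m : Ay = b,\ y_N \ge 0\}$. *)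

From HB Require Import structures.
From mathcomp Require Import all_boot all_order all_algebra.
From mathcomp Require Import boolp classical_sets reals constructive_ereal ereal.
Set Implicit Arguments. Unset Strict Implicit. Unset Printing Implicit Defensive.
Import Order.TTheory GRing.Theory Num.Theory.
Local Open Scope ring_scope.
Local Open Scope classical_set_scope.

Section Defs.
Variable R : realType.

Definition dotv {n} (u v : 'cV[R]_n) : R := \sum_(i < n) u i 0 * v i 0.

Definition vle {n} (u v : 'cV[R]_n) : Prop := forall i, u i 0 <= v i 0.

Definition polyhedron {n} (X : set 'cV[R]_n) : Prop :=
  exists k (G : 'M[R]_(k, n)) (g : 'cV[R]_k), X = [set x | vle (G *m x) g].

Definition sigma {n} (S : set 'cV[R]_n) (a : 'cV[R]_n) : \bar R :=
  ereal_inf [set (dotv a x)%:E | x in S].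

Definition fval {m p} (Q : 'M[R]_(p, m)) (d : 'cV[R]_m) (S : set 'cV[R]_m)
  (w : 'cV[R]_p) : \bar R :=
  ereal_inf [set (dotv d y)%:E | y in [set y | S y /\ Q *m y = w]].

Definition epi {m p} (Q : 'M[R]_(p, m)) (d : 'cV[R]_m) (S : set 'cV[R]_m)
  : set ('cV[R]_p * R) :=
  [set wt | (fval Q d S wt.1 <= wt.2%:E)%E].

Definition sigma_pair {p} (E : set ('cV[R]_p * R)) (a : 'cV[R]_p) (a0 : R) : \bar R :=
  ereal_inf [set (dotv a wt.1 + a0 * wt.2)%:E | wt in E].

Definition polyY {q m} (A : 'M[R]_(q, m)) (b : 'cV[R]_q) : set 'cV[R]_m :=
  [set y | A *m y = b /\ vle 0 y].

(* A basis is encoded by an injective enumeration f : 'I_q -> 'I_m of B,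
   with A_B := colsub f A square invertible; N = complement of codom f. *)
Definition is_basis {q m} (A : 'M[R]_(q, m)) (f : 'I_q -> 'I_m) : Prop :=
  injective f /\ colsub f A \in unitmx.

Definition optimal_basis {q m} (A : 'M[R]_(q, m)) (b : 'cV[R]_q)
  (g : 'cV[R]_m) (f : 'I_q -> 'I_m) : Prop :=
  is_basis A f /\
  vle 0 (invmx (colsub f A) *m b) /\
  (forall j : 'I_m, j \notin codom f ->
     0 <= g j 0 - ((rowsub f g)^T *m invmx (colsub f A) *m A) 0 j).

Definition corner {q m} (A : 'M[R]_(q, m)) (b : 'cV[R]_q) (f : 'I_q -> 'I_m)
  : set 'cV[R]_m :=
  [set y | A *m y = b /\ forall j : 'I_m, j \notin codom f -> 0 <= y j 0].

Definition dual_obj {n m p} (X : set 'cV[R]_n) (Y : set 'cV[R]_m)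
  (T : 'M[R]_(p, n)) (Q : 'M[R]_(p, m)) (h : 'cV[R]_p) (c : 'cV[R]_n)
  (d : 'cV[R]_m) (a : 'cV[R]_p) : \bar R :=
  ((- dotv a h)%:E + sigma X (c + T^T *m a) + sigma Y (Q^T *m a + d))%E.

End Defs.

From HB Require Import structures.
From mathcomp Require Import all_boot all_order all_algebra.
From mathcomp Require Import boolp classical_sets reals constructive_ereal ereal.
From mathcomp Require Import lra.
Set Implicit Arguments. Unset Strict Implicit. Unset Printing Implicit Defensive.
Import Order.TTheory GRing.Theory Num.Theory.
Local Open Scope ring_scope.
Local Open Scope classical_set_scope.

(* Fourier-Motzkin elimination proves Farkas' lemma, hence that for every
   [del > 0] some multiplier [a] has Lagrangian at least [z* - del] on [X * Y];
   as [ahat] maximizes the dual, [z* <= dual_obj ahat].  The basic solution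
   [ybar] of [B] lies in [Y] and, the reduced costs being nonnegative off [B],
   minimizes [(Q^T ahat + d)^T y] over the whole corner [C_B].  For [x] in [X]
   and [y] in [C_B] with [Q y = h - T x] this gives
     [c^T x + d^T y = -ahat^T h + (c + T^T ahat)^T x + (Q^T ahat + d)^T y
                    >= dual_obj ahat >= z*],
   while [Y <= C_B] gives the converse bound; the same minorant
   [(Q^T ahat + d)^T ybar - ahat^T w] of [f_{C_B}(w)] is the Lagrangian cut. *)

Section FourierMotzkin.
Variable R : realFieldType.

(* [(a, b)] stands for the inequality [a . x <= b]; coefficients are indexed by
   [nat] so that eliminating a variable does not change the type. *)
Definition ineq := ((nat -> R) * R)%type.

Definition dotN N (a x : nat -> R) := \sum_(i < N) a i * x i.

Definition satI N (x : nat -> R) (u : ineq) := dotN N u.1 x <= u.2.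

Definition zeroI : ineq := (fun _ => 0, 0).
Definition addI (u v : ineq) : ineq := (fun i => u.1 i + v.1 i, u.2 + v.2).
Definition sclI (k : R) (u : ineq) : ineq := (fun i => k * u.1 i, k * u.2).

Lemma dotN_addl N (a b x : nat -> R) :
  dotN N (fun i => a i + b i) x = dotN N a x + dotN N b x.
Proof. by rewrite /dotN -big_split; apply: eq_bigr => i _; rewrite mulrDl. Qed.

Lemma dotN_scll N k (a x : nat -> R) : dotN N (fun i => k * a i) x = k * dotN N a x.
Proof. by rewrite /dotN mulr_sumr; apply: eq_bigr => i _; rewrite mulrA. Qed.

Lemma dotN_recr N (a x : nat -> R) : dotN N.+1 a x = dotN N a x + a N * x N.
Proof. by rewrite /dotN big_ord_recr. Qed.

Lemma eq_dotNr N (a x y : nat -> R) :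
  (forall i, (i < N)%N -> x i = y i) -> dotN N a x = dotN N a y.
Proof. by move=> exy; apply: eq_bigr => i _; rewrite exy. Qed.

Section Cone.
Variables (I : finType) (F : I -> ineq).

Inductive cone : ineq -> Prop :=
| cone_gen i : cone (F i)
| cone_zero : cone zeroI
| cone_add u v : cone u -> cone v -> cone (addI u v)
| cone_scl k u : 0 <= k -> cone u -> cone (sclI k u)
| cone_weak u b : cone u -> u.2 <= b -> cone (u.1, b).

Lemma cone_coord0 j u : (forall i, (F i).1 j = 0) -> cone u -> u.1 j = 0.
Proof.
move=> F0; elim=> {u} [i||u v _ uj _ vj|k u _ _ uj|] //=.
- by rewrite uj vj addr0.
- by rewrite uj mulr0.
Qed.

Lemma cone_combination u : cone u ->
  exists2 w : I -> R, (forall i, 0 <= w i) &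
    (forall j, u.1 j = \sum_i w i * (F i).1 j) /\ \sum_i w i * (F i).2 <= u.2.
Proof.
elim=> {u} [i0||u v _ [w1 w10 [e1 f1]] _ [w2 w20 [e2 f2]]
           |k u k0 _ [w w0 [e f]]|u b _ [w w0 [e f]] ub].
- exists (fun i => (i == i0)%:R) => [i|]; first exact: ler0n.
  by split => [j|]; rewrite (bigD1 i0) //= eqxx mul1r big1 ?addr0 // => i /negbTE->;
    rewrite mul0r.
- exists (fun _ => 0) => // ; split => [j|]; rewrite big1 // => i _; exact: mul0r.
- exists (fun i => w1 i + w2 i) => [i|]; first by rewrite addr_ge0.
  split => [j|] /=; first by rewrite e1 e2 -big_split; apply: eq_bigr => i _; rewrite mulrDl.
  rewrite (eq_bigr (fun i => w1 i * (F i).2 + w2 i * (F i).2)) => [|i _]; last exact: mulrDl.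
  by rewrite big_split lerD.
- exists (fun i => k * w i) => [i|]; first exact: mulr_ge0.
  split => [j|] /=; first by rewrite e mulr_sumr; apply: eq_bigr => i _; rewrite mulrA.
  rewrite (eq_bigr (fun i => k * (w i * (F i).2))) => [|i _]; last by rewrite mulrA.
  by rewrite -mulr_sumr ler_wpM2l.
- by exists w => //; split => //; apply: le_trans ub.
Qed.

End Cone.

Lemma cone_trans (I J : finType) (F : I -> ineq) (E : J -> ineq) u :
  (forall j, cone F (E j)) -> cone E u -> cone F u.
Proof.
move=> EF; elim=> {u} [j||u v _ Fu _ Fv|k u k0 _ Fu|u b _ Fu ub].
- exact: EF.
- exact: cone_zero.
- exact: cone_add.
- exact: cone_scl.
- exact: cone_weak.
Qed.

Lemma exists_between (ls us : seq R) :
  (forall l u, l \in ls -> u \in us -> l <= u) ->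
  exists t, (forall l, l \in ls -> l <= t) /\ (forall u, u \in us -> t <= u).
Proof.
elim: ls => [|l ls IH] lu.
  exists (foldr Num.min 0 us); split => // u.
  elim: us {lu} => // u' us IHu; rewrite inE => /predU1P[->|/IHu le_u] /=.
    by rewrite ge_min lexx.
  by rewrite ge_min le_u orbT.
have [t [lt tu]] : exists t, (forall l, l \in ls -> l <= t) /\ (forall u, u \in us -> t <= u).
  by apply: IH => l' u l'ls uus; apply: lu; rewrite ?inE ?l'ls ?orbT.
exists (Num.max l t); split; last by move=> u uus; rewrite ge_max tu // lu ?inE ?eqxx.
by move=> l'; rewrite inE => /predU1P[->|/lt l't]; rewrite le_max ?lexx // l't orbT.
Qed.

(* Fourier-Motzkin elimination of the variable [N]; the indices that select
   nothing (a pair without opposite signs, or an inequality involving [N])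
   yield the trivial inequality [0 <= 0]. *)
Definition fm_elim N (I : finType) (F : I -> ineq) (k : I + I * I) : ineq :=
  let s i := (F i).1 N in
  match k with
  | inl i => if s i == 0 then F i else zeroI
  | inr (i, j) => if (0 < s i) && (s j < 0)
                  then addI (sclI (- s j) (F i)) (sclI (s i) (F j)) else zeroI
  end.

Section FMElim.
Variables (N : nat) (I : finType) (F : I -> ineq).
Let s i := (F i).1 N.

Lemma fm_elim_cone k : cone F (fm_elim N F k).
Proof.
case: k => [i|[i j]] /=; first by case: ifP => _; constructor.
case: ifP => [/andP[si sj]|_]; last exact: cone_zero.
by apply: cone_add; apply: cone_scl; rewrite ?oppr_ge0 ?ltW //; apply: cone_gen.
Qed.

Lemma fm_elim_coord k : (fm_elim N F k).1 N = 0.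
Proof.
case: k => [i|[i j]] /=; first by case: ifP => // /eqP.
by case: ifP => //= _; rewrite mulNr mulrC addNr.
Qed.

Lemma fm_elim_lift x : (forall k, satI N x (fm_elim N F k)) ->
  exists x', forall i, satI N.+1 x' (F i).
Proof.
move=> xE; pose bound i := ((F i).2 - dotN N (F i).1 x) / s i.
have bound_in (P : pred I) i : P i -> bound i \in [seq bound j | j <- enum I & P j].
  by move=> Pi; apply: map_f; rewrite mem_filter Pi; apply: mem_enum.
have [t [lo up]] : exists t, (forall l, l \in [seq bound i | i <- enum I & s i < 0] -> l <= t)
    /\ (forall u, u \in [seq bound i | i <- enum I & 0 < s i] -> t <= u).
  apply: exists_between => _ _ /mapP[j + ->] /mapP[i + ->].
  rewrite !mem_filter => /andP[sj _] /andP[si _].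
  have := xE (inr (i, j)); rewrite /satI /= (_ : (0 < s i) && (s j < 0)) ?si ?sj //=.
  rewrite dotN_addl !dotN_scll /bound ler_pdivlMr // mulrAC ler_ndivrMr //.
  rewrite /s in si sj *; nra.
exists (fun i => if i == N then t else x i) => i.
rewrite /satI dotN_recr eqxx (@eq_dotNr _ _ _ x); last first.
  by move=> i' /ltn_eqF ->.
have [si|si|si] := ltgtP (s i) 0.
- have := lo _ (bound_in _ _ si).
  by rewrite /bound ler_ndivrMr // /s; lra.
- have := up _ (bound_in _ _ si).
  by rewrite /bound ler_pdivlMr // /s; lra.
- by have := xE (inl i); rewrite /s in si; rewrite /satI /= si eqxx mul0r addr0.
Qed.

End FMElim.

Lemma farkas_cone N (I : finType) (F : I -> ineq) :
  ~ (exists x, forall i, satI N x (F i)) ->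
  exists u, [/\ cone F u, forall j, (j < N)%N -> u.1 j = 0 & u.2 < 0].
Proof.
elim: N I F => [|N IH] I F infeas.
  have [i Fi] : exists i, (F i).2 < 0.
    apply: contra_notP infeas => nneg; exists (fun _ => 0) => i.
    by rewrite /satI /dotN big_ord0 leNgt; apply/negP => Fi; apply: nneg; exists i.
  by exists (F i); split => //; apply: cone_gen.
have [u [Eu u0 u2]] : exists u, [/\ cone (fm_elim N F) u,
    forall j, (j < N)%N -> u.1 j = 0 & u.2 < 0].
  by apply: IH => -[x /fm_elim_lift]; apply: infeas.
exists u; split => // [|j]; first exact: cone_trans (@fm_elim_cone N I F) Eu.
rewrite ltnS leq_eqVlt => /predU1P[->|]; last exact: u0.
by apply: cone_coord0 Eu => k; apply: fm_elim_coord.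
Qed.

End FourierMotzkin.

Section LinearInequalities.
Variable R : realType.

Lemma dotv_mx n (u v : 'cV[R]_n) : dotv u v = (u^T *m v) 0 0.
Proof. by rewrite mxE; apply: eq_bigr => i _; rewrite mxE. Qed.

Lemma dotvC n (u v : 'cV[R]_n) : dotv u v = dotv v u.
Proof. by apply: eq_bigr => i _; rewrite mulrC. Qed.

Lemma dotvDl n (u v x : 'cV[R]_n) : dotv (u + v) x = dotv u x + dotv v x.
Proof. by rewrite /dotv -big_split; apply: eq_bigr => i _; rewrite mxE mulrDl. Qed.

Lemma dotvDr n (u x y : 'cV[R]_n) : dotv u (x + y) = dotv u x + dotv u y.
Proof. by rewrite dotvC dotvDl !(dotvC _ u). Qed.

Lemma dotvNr n (u x : 'cV[R]_n) : dotv u (- x) = - dotv u x.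
Proof. by rewrite /dotv -sumrN; apply: eq_bigr => i _; rewrite mxE mulrN. Qed.

Lemma dotvBr n (u x y : 'cV[R]_n) : dotv u (x - y) = dotv u x - dotv u y.
Proof. by rewrite dotvDr dotvNr. Qed.

Lemma dotvZl n k (u x : 'cV[R]_n) : dotv (k *: u) x = k * dotv u x.
Proof. by rewrite /dotv mulr_sumr; apply: eq_bigr => i _; rewrite mxE mulrA. Qed.

Lemma dotv0r n (u : 'cV[R]_n) : dotv u 0 = 0.
Proof. by rewrite /dotv big1 // => i _; rewrite mxE mulr0. Qed.

Lemma dotv_trmx_mul p n (M : 'M[R]_(p, n)) a x : dotv (M^T *m a) x = dotv a (M *m x).
Proof. by rewrite !dotv_mx trmx_mul trmxK mulmxA. Qed.

Lemma dotv_col_mx n1 n2 (u1 v1 : 'cV[R]_n1) (u2 v2 : 'cV[R]_n2) :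
  dotv (col_mx u1 u2) (col_mx v1 v2) = dotv u1 v1 + dotv u2 v2.
Proof. by rewrite !dotv_mx tr_col_mx mul_row_col mxE. Qed.

Lemma vle_col_mx n1 n2 (u1 v1 : 'cV[R]_n1) (u2 v2 : 'cV[R]_n2) :
  vle (col_mx u1 u2) (col_mx v1 v2) <-> vle u1 v1 /\ vle u2 v2.
Proof.
split=> [le_uv|[le1 le2] i].
  by split=> i; [have := le_uv (lshift n2 i); rewrite !col_mxEu
                |have := le_uv (rshift n1 i); rewrite !col_mxEd].
by rewrite -(splitK i); case: (split i) => j /=; rewrite ?col_mxEu ?col_mxEd.
Qed.

Lemma vlexx n (u : 'cV[R]_n) : vle u u.
Proof. by []. Qed.

Lemma vle0P n (u : 'cV[R]_n) : vle 0 u <-> forall i, 0 <= u i 0.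
Proof. by split=> u0 i; have := u0 i; rewrite mxE. Qed.

Lemma vle_anti n (u v : 'cV[R]_n) : vle u v -> vle v u -> u = v.
Proof.
by move=> uv vu; apply/matrixP => i j; rewrite (ord1 j); apply/eqP; rewrite eq_le uv vu.
Qed.

Lemma vleN n (u v : 'cV[R]_n) : vle (- u) (- v) <-> vle v u.
Proof. by split=> le_uv i; have := le_uv i; rewrite !mxE lerN2. Qed.

Lemma dotv_vle n (w u v : 'cV[R]_n) : vle 0 w -> vle u v -> dotv w u <= dotv w v.
Proof.
by move=> /vle0P w0 uv; apply: ler_sum => i _; apply: ler_wpM2l (uv i).
Qed.

Lemma farkas_mx N K (M : 'M[R]_(K, N)) (g : 'cV[R]_K) :
  ~ (exists z, vle (M *m z) g) ->
  exists w : 'cV[R]_K, [/\ vle 0 w, w^T *m M = 0 & dotv w g < 0].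
Proof.
move=> infeas.
pose F r : ineq R := (fun i => if insub i is Some j then M r j else 0, g r 0).
have F1 r (j : 'I_N) : (F r).1 j = M r j by rewrite /= valK.
have [u [Fu u0 u2]] : exists u, [/\ cone F u, forall j, (j < N)%N -> u.1 j = 0 & u.2 < 0].
  apply: farkas_cone => -[x satx]; apply: infeas; exists (\col_j x j) => r.
  suff -> : (M *m \col_j x j) r 0 = dotN N (F r).1 x by exact: satx.
  by rewrite mxE; apply: eq_bigr => j _; rewrite F1 mxE.
have [w w0 [uw wg]] := cone_combination Fu.
exists (\col_r w r); split.
- by apply/vle0P => r; rewrite mxE.
- apply/matrixP => i j; rewrite !mxE; transitivity (u.1 j); last exact: u0.
  by rewrite uw; apply: eq_bigr => r _; rewrite !mxE F1.
- apply: le_lt_trans u2; apply: le_trans wg.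
  by rewrite le_eqVlt; apply/orP; left; apply/eqP; apply: eq_bigr => r _; rewrite mxE.
Qed.

(* Farkas for [G z <= g, E z = e, o^T z <= beta]; the multiplier of the last
   row is positive because of the feasible point [z0], and dividing by it gives
   the Lagrange multipliers. *)
Lemma lagrange_mx N k p (G : 'M[R]_(k, N)) (g : 'cV[R]_k)
    (E : 'M[R]_(p, N)) (e : 'cV[R]_p) (o : 'cV[R]_N) (beta : R) :
  (exists2 z0, vle (G *m z0) g & E *m z0 = e) ->
  (forall z, vle (G *m z) g -> E *m z = e -> beta < dotv o z) ->
  exists al : 'cV[R]_p,
    forall z, vle (G *m z) g -> beta <= dotv o z + dotv al (E *m z - e).
Proof.
move=> [z0 Gz0 Ez0] beta_lt.
pose M := col_mx (col_mx G o^T) (col_mx E (- E)).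
pose rhs := col_mx (col_mx g beta%:M) (col_mx e (- e)).
have infeas : ~ exists z, vle (M *m z) rhs.
  move=> [z]; rewrite !mul_col_mx !vle_col_mx mulNmx vleN => -[[Gz oz] [Ez1 Ez2]].
  have := oz 0; rewrite -dotv_mx mxE eqxx mulr1n leNgt => /negP; apply.
  exact: beta_lt Gz (vle_anti Ez1 Ez2).
have [w [w0 wM wrhs]] := farkas_mx infeas.
move: w0 wM wrhs; rewrite -[w]vsubmxK -[usubmx w]vsubmxK -[dsubmx w]vsubmxK.
move: (usubmx (usubmx w)) (dsubmx (usubmx w)) (usubmx (dsubmx w)) (dsubmx (dsubmx w)).
move=> w1 w2 w3 w4; rewrite -!col_mx0 !vle_col_mx => -[[w10 w20] _].
rewrite !tr_col_mx !mul_row_col !dotv_col_mx [w2]mx11_scalar tr_scalar_mx mul_scalar_mx.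
set s := w2 0 0; set a := w3 - w4 => wM wrhs.
have s0 : 0 <= s by move/vle0P: w20; apply.
have {}wM : G^T *m w1 + s *: o + E^T *m a = 0.
  apply: trmx_inj; rewrite trmx0 -wM !linearD /= linearZ /= !trmx_mul !trmxK.
  by rewrite linearN /= mulNmx mulmxN.
have {}wrhs : dotv w1 g + s * beta + dotv a e < 0.
  have -> : s * beta = dotv s%:M beta%:M by rewrite /dotv big_ord1 !mxE !mulr1n.
  by move: wrhs; rewrite dotvNr (dotvC a) /a dotvBr !(dotvC e) addrA.
have key z : vle (G *m z) g -> 0 < s * (dotv o z - beta) + dotv a (E *m z - e).
  move=> Gz; have := dotv_vle w10 Gz.
  have : dotv w1 (G *m z) + s * dotv o z + dotv a (E *m z) = 0.
    by rewrite -!dotv_trmx_mul -dotvZl -!dotvDl wM dotvC dotv0r.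
  by rewrite mulrBr dotvBr; lra.
have s_pos : 0 < s.
  have := key z0 Gz0; rewrite Ez0 subrr dotv0r addr0 pmulr_lgt0 // subr_gt0.
  exact: beta_lt.
exists (s^-1 *: a) => z Gz; have := key z Gz.
rewrite dotvZl mulrBr -(ler_pM2l s_pos) mulrDr mulVKf ?gt_eqF //; lra.
Qed.

End LinearInequalities.

Section Polyhedra.
Variable R : realType.

Lemma polyY_polyhedron q m (A : 'M[R]_(q, m)) b : polyhedron (polyY A b).
Proof.
exists (q + (q + m))%N, (col_mx A (col_mx (- A) (- 1%:M))), (col_mx b (col_mx (- b) 0)).
apply/seteqP; split=> y /=; rewrite !mul_col_mx !mulNmx mul1mx -oppr0 !vle_col_mx !vleN.
  by move=> [-> y0]; do !split => //; apply: vlexx.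
by move=> [Ay [bA y0]]; split => //; apply: vle_anti.
Qed.

Lemma polyhedron_col_mx n m (X : set 'cV[R]_n) (Y : set 'cV[R]_m) :
  polyhedron X -> polyhedron Y ->
  exists k (G : 'M[R]_(k, n + m)) g, forall x y, X x /\ Y y <-> vle (G *m col_mx x y) g.
Proof.
move=> [k1 [G1 [g1 ->]]] [k2 [G2 [g2 ->]]].
exists (k1 + k2)%N, (block_mx G1 0 0 G2), (col_mx g1 g2) => x y.
by rewrite mul_block_col !mul0mx addr0 add0r vle_col_mx.
Qed.

End Polyhedra.

Section ExtendedInfima.
Variable R : realType.

Lemma ereal_inf_image_le T (S : set T) (F : T -> R) x :
  S x -> (ereal_inf [set (F y)%:E | y in S] <= (F x)%:E)%E.
Proof. by move=> Sx; apply: ereal_inf_lbound; exists x. Qed.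

Lemma ereal_inf_image_ge T (S : set T) (F : T -> R) K :
  (forall x, S x -> K <= F x) -> (K%:E <= ereal_inf [set (F x)%:E | x in S])%E.
Proof. by move=> KF; apply/ereal_infP => _ [x Sx <-]; rewrite lee_fin KF. Qed.

Lemma ereal_inf_image_add_ge T1 T2 (S1 : set T1) (S2 : set T2)
    (F1 : T1 -> R) (F2 : T2 -> R) K :
  S1 !=set0 -> S2 !=set0 -> (forall x y, S1 x -> S2 y -> K <= F1 x + F2 y) ->
  (K%:E <= ereal_inf [set (F1 x)%:E | x in S1] + ereal_inf [set (F2 y)%:E | y in S2])%E.
Proof.
move=> [x0 S1x0] [y0 S2y0] KF.
have inf1_ge y : S2 y -> ((K - F2 y)%:E <= ereal_inf [set (F1 x)%:E | x in S1])%E.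
  by move=> S2y; apply: ereal_inf_image_ge => x S1x; rewrite lerBlDr KF.
have [s inf1E] : exists s, ereal_inf [set (F1 x)%:E | x in S1] = s%:E.
  move: (inf1_ge _ S2y0) (ereal_inf_image_le F1 S1x0).
  by case: (ereal_inf _) => [s _ _|//|//]; exists s.
have inf2_ge : ((K - s)%:E <= ereal_inf [set (F2 y)%:E | y in S2])%E.
  apply: ereal_inf_image_ge => y S2y; have := inf1_ge y S2y.
  by rewrite inf1E lee_fin; lra.
by rewrite inf1E; apply: le_trans (leeD (lexx _) inf2_ge); rewrite -EFinD subrKC.
Qed.

End ExtendedInfima.

Section LagrangianDuality.
Variables (R : realType) (n m p : nat) (X : set 'cV[R]_n) (Y : set 'cV[R]_m).
Variables (T : 'M[R]_(p, n)) (Q : 'M[R]_(p, m)) (h : 'cV[R]_p).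
Variables (c : 'cV[R]_n) (d : 'cV[R]_m).

Definition lp_feasible : set ('cV[R]_n * 'cV[R]_m) :=
  [set xy | X xy.1 /\ Y xy.2 /\ T *m xy.1 + Q *m xy.2 = h].

Definition lp_value : \bar R :=
  ereal_inf [set (dotv c xy.1 + dotv d xy.2)%:E | xy in lp_feasible].

Definition lagrangian (a : 'cV[R]_p) x y :=
  dotv c x + dotv d y + dotv a (T *m x + Q *m y - h).

Lemma lagrangianE a x y :
  lagrangian a x y = - dotv a h + dotv (c + T^T *m a) x + dotv (Q^T *m a + d) y.
Proof. by rewrite /lagrangian !dotvDl !dotvBr !dotvDr !dotv_trmx_mul; lra. Qed.

Lemma dual_obj_le_lagrangian a x y :
  X x -> Y y -> (dual_obj X Y T Q h c d a <= (lagrangian a x y)%:E)%E.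
Proof.
move=> Xx Yy; rewrite lagrangianE !EFinD /dual_obj.
by apply: leeD; [apply: leeD|]; rewrite ?lexx ?ereal_inf_image_le.
Qed.

Lemma lagrangian_le_dual_obj a L :
  X !=set0 -> Y !=set0 -> (forall x y, X x -> Y y -> L <= lagrangian a x y) ->
  (L%:E <= dual_obj X Y T Q h c d a)%E.
Proof.
move=> X0 Y0 L_le; rewrite /dual_obj -addeA -(subrK (- dotv a h) L) EFinD addeC.
apply: leeD => //; apply: ereal_inf_image_add_ge => // x y Xx Yy.
by have := L_le x y Xx Yy; rewrite lagrangianE; lra.
Qed.

Lemma lp_value_le x y :
  lp_feasible (x, y) -> (lp_value <= (dotv c x + dotv d y)%:E)%E.
Proof. exact: (ereal_inf_image_le (fun xy => dotv c xy.1 + dotv d xy.2)). Qed.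

Lemma lp_feasible_nonempty z : lp_value = z%:E -> lp_feasible !=set0.
Proof.
move=> val_z; apply: contrapT => /set0P/negP/negbNE/eqP empty.
by move: val_z; rewrite /lp_value empty image_set0 ereal_inf0.
Qed.

Lemma lagrange_gap z del : polyhedron X -> polyhedron Y ->
  lp_value = z%:E -> 0 < del ->
  exists a, forall x y, X x -> Y y -> z - del <= lagrangian a x y.
Proof.
move=> HX HY val_z del0.
have [[x0 y0] [/= Xx0 [Yy0 Exy0]]] := lp_feasible_nonempty val_z.
have [k [G [g XY]]] := polyhedron_col_mx HX HY.
have [|xy|a aE] := @lagrange_mx R _ _ _ G g (row_mx T Q) h (col_mx c d) (z - del).
- by exists (col_mx x0 y0); [exact/XY | rewrite mul_row_col].
- rewrite -[xy]vsubmxK => /XY[Xx Yy]; rewrite mul_row_col dotv_col_mx => Exy.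
  apply: (@lt_le_trans _ _ z); first by rewrite ltrBlDr ltrDl.
  by rewrite -lee_fin -val_z; apply: lp_value_le.
- by exists a => x y Xx Yy; have := aE _ (iffLR (XY x y) (conj Xx Yy));
    rewrite mul_row_col dotv_col_mx.
Qed.

Lemma lp_value_le_dual_opt z ahat : polyhedron X -> polyhedron Y ->
  lp_value = z%:E ->
  (forall a, (dual_obj X Y T Q h c d a <= dual_obj X Y T Q h c d ahat)%E) ->
  (z%:E <= dual_obj X Y T Q h c d ahat)%E.
Proof.
move=> HX HY val_z ahat_opt.
have [[x0 y0] [/= Xx0 [Yy0 _]]] := lp_feasible_nonempty val_z.
apply/lee_subgt0Pr => del del0; rewrite -EFinB.
have [a a_gap] := lagrange_gap HX HY val_z del0.
by apply: le_trans (ahat_opt a); apply: lagrangian_le_dual_obj a_gap; [exists x0|exists y0].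
Qed.

End LagrangianDuality.

Section OptimalBasis.
Variables (R : realType) (q m : nat) (A : 'M[R]_(q, m)) (b : 'cV[R]_q).
Variables (g : 'cV[R]_m) (f : 'I_q -> 'I_m).

Lemma polyY_sub_corner : polyY A b `<=` corner A b f.
Proof. by move=> y [Ay y0]; split=> // j _; have := y0 j; rewrite mxE. Qed.

(* The basic solution [ybar] (zero off [B], [A_B^-1 b] on [B]) lies in [Y], and
   on the corner [g^T y] equals [g^T ybar] plus the reduced costs [r y], which
   vanish on [B] and are nonnegative off [B], where [y >= 0]. *)
Lemma optimal_basis_argmin : optimal_basis A b g f ->
  exists2 ybar, polyY A b ybar & forall y, corner A b f y -> dotv g ybar <= dotv g y.
Proof.
move=> [[_ AB_unit] [w0 r0]].
set AB := colsub f A; set w := invmx AB *m b; pose P : 'M[R]_(m, q) := colsub f 1%:M.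
have colsubE k (M : 'M[R]_(k, m)) : M *m P = colsub f M by rewrite mulmx_colsub mulmx1.
exists (P *m w); first split.
- by rewrite mulmxA colsubE mulmxA mulmxV // mul1mx.
- apply/vle0P => j; rewrite mxE; apply: sumr_ge0 => i _.
  by move/vle0P: w0 => w0; rewrite mulr_ge0 // !mxE ler0n.
move=> y [Ay Cy].
set r := g^T - (rowsub f g)^T *m invmx AB *m A.
have gy : g^T *m y = r *m y + (rowsub f g)^T *m w by rewrite mulmxBl -!mulmxA Ay subrK.
have rB i : r 0 (f i) = 0.
  have : colsub f r = 0.
    by rewrite -colsubE /r mulmxBl -[_ *m A *m P]mulmxA !colsubE mulmxKV // trmx_mxsub subrr.
  by move/(congr1 (fun M : 'M_(1, q) => M 0 i)); rewrite !mxE.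
have ry : 0 <= (r *m y) 0 0.
  rewrite mxE; apply: sumr_ge0 => j _.
  have [/codomP[i ->]|jN] := boolP (j \in codom f); first by rewrite rB mul0r.
  by apply: mulr_ge0 (Cy j jN); have := r0 j jN; rewrite /r !mxE.
by rewrite !dotv_mx gy mulmxA colsubE trmx_mxsub [X in _ <= X]mxE lerDr.
Qed.

End OptimalBasis.

Section ValueFunction.
Variables (R : realType) (m p : nat) (Q : 'M[R]_(p, m)) (d : 'cV[R]_m).

Lemma fval_le_dotv (S : set 'cV[R]_m) w y :
  S y -> Q *m y = w -> (fval Q d S w <= (dotv d y)%:E)%E.
Proof. by move=> Sy Qy; apply: ereal_inf_image_le. Qed.

Lemma fval_ge_argmin (S : set 'cV[R]_m) a ybar w :
  (forall y, S y -> dotv (Q^T *m a + d) ybar <= dotv (Q^T *m a + d) y) ->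
  ((dotv (Q^T *m a + d) ybar - dotv a w)%:E <= fval Q d S w)%E.
Proof.
move=> ybar_min; apply: ereal_inf_image_ge => y [Sy <-].
by have := ybar_min y Sy; rewrite !dotvDl !dotv_trmx_mul; lra.
Qed.

Lemma sigma_pair_epi_le (S : set 'cV[R]_m) a ybar :
  S ybar -> (sigma_pair (epi Q d S) a 1 <= (dotv (Q^T *m a + d) ybar)%:E)%E.
Proof.
move=> Sybar; rewrite dotvDl dotv_trmx_mul -[dotv d ybar]mul1r.
apply: (ereal_inf_image_le (fun wt => dotv a wt.1 + 1 * wt.2)
  (x := (Q *m ybar, dotv d ybar))).
exact: fval_le_dotv.
Qed.

End ValueFunction.

Unset Implicit Arguments. Set Strict Implicit.

Theorem mainTheorem6 (R : realType) (n m p q : nat)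
  (X : set 'cV[R]_n) (T : 'M[R]_(p, n)) (Q : 'M[R]_(p, m)) (h : 'cV[R]_p)
  (c : 'cV[R]_n) (d : 'cV[R]_m) (A : 'M[R]_(q, m)) (b : 'cV[R]_q)
  (zstar : R) (ahat : 'cV[R]_p) (f : 'I_q -> 'I_m) :
  polyhedron X -> X !=set0 ->
  \rank A = q ->
  ereal_inf [set (dotv c xy.1 + dotv d xy.2)%:E | xy in
     [set xy : 'cV[R]_n * 'cV[R]_m |
        X xy.1 /\ polyY A b xy.2 /\ T *m xy.1 + Q *m xy.2 = h]] = zstar%:E ->
  (forall a : 'cV[R]_p,
     (dual_obj X (polyY A b) T Q h c d a <= dual_obj X (polyY A b) T Q h c d ahat)%E) ->
  optimal_basis A b (Q^T *m ahat + d) f ->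
  ereal_inf [set (dotv c xt.1 + xt.2)%:E | xt in
     [set xt : 'cV[R]_n * R |
        X xt.1 /\ epi Q d (corner A b f) (h - T *m xt.1, xt.2)]] = zstar%:E
  /\
  (forall (x : 'cV[R]_n) (theta : R),
     epi Q d (corner A b f) (h - T *m x, theta) ->
     (sigma_pair (epi Q d (polyY A b)) ahat 1
        <= (dotv ahat (h - T *m x) + theta)%:E)%E).
Proof.
(* Full row rank of [A] only matters for the existence of an optimal basis,
   which is assumed here. *)
move=> HX _ _ val_z ahat_opt basis_opt.
have [ybar Yybar ybar_min] := optimal_basis_argmin basis_opt.
have z_le_dual := lp_value_le_dual_opt HX (polyY_polyhedron A b) val_z ahat_opt.
have cut x th : epi Q d (corner A b f) (h - T *m x, th) ->
    dotv (Q^T *m ahat + d) ybar <= dotv ahat (h - T *m x) + th.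
  by move=> /(le_trans (fval_ge_argmin _ ybar_min)); rewrite /= lee_fin; lra.
split; last first.
  move=> x th /cut cut_x; apply: le_trans (sigma_pair_epi_le Q d ahat Yybar) _.
  by rewrite lee_fin.
apply/eqP; rewrite eq_le; apply/andP; split.
- rewrite -val_z; apply: ereal_inf_le_tmp => _ [[x y] [/= Xx [Yy Exy]] <-].
  exists (x, dotv d y) => //; split=> //; rewrite /epi /=.
  by apply: fval_le_dotv (polyY_sub_corner f Yy) _; rewrite -Exy addrC addKr.
- apply: ereal_inf_image_ge => -[x th] [/= Xx /cut cut_x].
  have := le_trans z_le_dual (dual_obj_le_lagrangian T Q h c d ahat Xx Yybar).
  by rewrite lee_fin lagrangianE dotvDl dotv_trmx_mul dotvBr in cut_x *; lra.
Qed.
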